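(* For every $p\in\mathbb Z$ and every $\tau\in\{0,\dots,\beta(|p|)-1\}$, $$\|D_{p,\tau}\|_{L^2(I_{p,\tau})}=\Big(\int_{I_{p,\tau}}|D_{p,\tau}(t)|^2\,dt\Big)^{1/2}>0.85,$$ where $I_{p,\tau}=\Big[\frac{\tau}{\beta(|p|)}-\frac{1}{2\beta(|p|)},\ \frac{\tau}{\beta(|p|)}+\frac{1}{2\beta(|p|)}\Big]$, understood as an interval on the circle $\mathbb R/\mathbb Z$ (in particular $I_{p,0}=[0,\frac{1}{2\beta(|p|)})\cup(1-\frac{1}{2\beta(|p|)},1]$). Since $\|D_{p,\tau}\|_{L^2([0,1])}=1$, the part of the $L^2$-norm of $D_{p,\tau}$ outside $I_{p,\tau}$ is correspondingly small.
   Context: The functions $D_{p,\tau}$ are 1-periodic. Define $\nu,\beta$ on $\mathbb N$ by $\nu(0)=0,\ \beta(0)=1$; $\nu(1)=1,\ \beta(1)=1$; for $p\ge 2$, $\nu(p)=2^{p-1}+2^{p-2}$, $\beta(p)=2^{p-1}$; set $\nu(-p)=-\nu(p)$, $\beta(-p)=\beta(p)$. The DOST functions are: $D_{0,0}(t)=1$; $D_{1,0}(t)=e^{2\pi i t}$; for $p\ge 2$, $\tau=0,\dots,\beta(p)-1$, $D_{p,\tau}(t)=\beta(p)^{-1/2}\sum_{j=0}^{\beta(p)-1}e^{2\pi i(\beta(p)+j)(t-\tau/\beta(p))}$; and for $p<0$, $D_{p,\tau}=\overline{D_{-p,\tau}}$. *)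

From Stdlib Require Import Reals ZArith.
From Coquelicot Require Import Coquelicot.
Open Scope R_scope.

Definition beta_nat (n : nat) : nat :=
  match n with
  | O => 1%nat
  | S O => 1%nat
  | S m => (2 ^ m)%nat
  end.

Definition beta (p : Z) : nat := beta_nat (Z.abs_nat p).

Definition e2pi (x : R) : C := (cos (2 * PI * x), sin (2 * PI * x)).

Definition D_nat (p : nat) (tau : nat) (t : R) : C :=
  match p with
  | O => 1%C
  | S O => e2pi t
  | _ =>
      let b := INR (beta_nat p) in
      Cmult (RtoC (/ sqrt b))
        (sum_n (G := C_AbelianMonoid)
           (fun j : nat => e2pi ((b + INR j) * (t - INR tau / b)))
           (beta_nat p - 1))
  end.

Definition DOST (p : Z) (tau : nat) (t : R) : C :=
  if (p <? 0)%Z then Cconj (D_nat (Z.abs_nat p) tau t)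
  else D_nat (Z.abs_nat p) tau t.

From Stdlib Require Import Reals Lra Lia ZArith.
From Coquelicot Require Import Coquelicot.
Open Scope R_scope.

(* Writing b = beta(|p|), s = t - tau/b and e(x) = exp(2 pi i x), one has
   |D_{p,tau}(t)|^2 = |sum_{j<b} e((b+j)s)|^2 / b.  Rotating the sum by its middle
   phase, its modulus is at least sum_{j<b} cos(2 pi s (j - (b-1)/2)), and
   cos x >= 1 - x^2/2 bounds this below by b (1 - pi^2 b^2 s^2 / 6).  Hence
   |D_{p,tau}(t)|^2 >= b - pi^2 b^3 s^2 / 3 on |s| <= 1/(2b), a parabola whose
   integral over that interval is 1 - pi^2/36 > 0.85^2. *)

Lemma PI_sqr_le : PI ^ 2 <= 9.9.
Proof.
  destruct (PI_2_3_7_ineq 1) as [_ H].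
  unfold PI_2_3_7_tg, tg_alt, Ratan_seq in H; simpl in H.
  assert (0 < PI) by apply PI_RGT_0.
  nra.
Qed.

Lemma cos_ge_1_sub_sqr (x : R) : - PI / 2 <= x <= PI / 2 -> 1 - x ^ 2 / 2 <= cos x.
Proof.
  intros [Hlo Hhi]; destruct (cos_bound x 0 Hlo Hhi) as [H _].
  unfold cos_approx, cos_term in H; simpl in H; lra.
Qed.

Lemma Cmod_e2pi (x : R) : Cmod (e2pi x) = 1.
Proof.
  rewrite <- sqrt_1, <- (sin2_cos2 (2 * PI * x)).
  unfold Cmod, e2pi, Rsqr; simpl; f_equal; ring.
Qed.

Lemma sum_f_R0_sqr_sub (c : R) (N : nat) :
  sum_f_R0 (fun j => (INR j - c) ^ 2) N
  = (INR N + 1) * c ^ 2 - c * INR N * (INR N + 1)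
    + INR N * (INR N + 1) * (2 * INR N + 1) / 6.
Proof. induction N; [simpl; field|]. rewrite tech5, IHN, S_INR. field. Qed.

Lemma sum_f_R0_sqr_sub_half (N : nat) :
  sum_f_R0 (fun j => (INR j - INR N / 2) ^ 2) N
  = INR N * (INR N + 1) * (INR N + 2) / 12.
Proof. rewrite sum_f_R0_sqr_sub; field. Qed.

Lemma continuous_sum_f_R0 (g : nat -> R -> R) (N : nat) (x : R) :
  (forall j, continuous (g j) x) -> continuous (fun t => sum_f_R0 (fun j => g j t) N) x.
Proof.
  intros Hg; induction N as [|N IH]; simpl; [apply Hg|].
  exact (continuous_plus _ (g (S N)) x IH (Hg (S N))).
Qed.

Lemma Cmod_sum_n_sqr (f : nat -> C) (N : nat) :
  Cmod (sum_n (G := C_AbelianMonoid) f N) ^ 2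
  = sum_f_R0 (fun j => Re (f j)) N ^ 2 + sum_f_R0 (fun j => Im (f j)) N ^ 2.
Proof.
  rewrite Cmod2_alt; do 2 f_equal;
    (induction N as [|N IH]; [rewrite sum_O; reflexivity|]);
    rewrite sum_Sn; simpl; rewrite <- IH; reflexivity.
Qed.

(* The left side is the squared real part of the sum rotated by [-phi]. *)
Lemma sum_cos_sub_sqr_le (x : nat -> R) (phi : R) (N : nat) :
  sum_f_R0 (fun j => cos (x j - phi)) N ^ 2
  <= sum_f_R0 (fun j => cos (x j)) N ^ 2 + sum_f_R0 (fun j => sin (x j)) N ^ 2.
Proof.
  set (A := sum_f_R0 (fun j => cos (x j)) N).
  set (S := sum_f_R0 (fun j => sin (x j)) N).
  assert (Hrot : sum_f_R0 (fun j => cos (x j - phi)) N = cos phi * A + sin phi * S).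
  { unfold A, S; rewrite !scal_sum, <- sum_plus.
    apply sum_eq; intros j _; rewrite cos_minus; ring. }
  rewrite Hrot.
  assert (Hpyth := sin2_cos2 phi); unfold Rsqr in Hpyth.
  assert (0 <= (sin phi * A - cos phi * S) ^ 2) by apply pow2_ge_0.
  nra.
Qed.

Lemma sum_cos_centered_ge (q : R) (N : nat) :
  Rabs q * INR N <= PI ->
  INR N + 1 - q ^ 2 * (INR N * (INR N + 1) * (INR N + 2)) / 24
  <= sum_f_R0 (fun j => cos (q * (INR j - INR N / 2))) N.
Proof.
  intros Hq.
  apply Rle_trans with (sum_f_R0 (fun j => 1 - (q * (INR j - INR N / 2)) ^ 2 / 2) N).
  - right.
    rewrite minus_sum, sum_cte, S_INR.
    rewrite (sum_eq _ (fun j => (INR j - INR N / 2) ^ 2 * (q ^ 2 / 2)))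
      by (intros j _; field).
    rewrite <- scal_sum, sum_f_R0_sqr_sub_half; field.
  - apply sum_Rle; intros j Hj; apply cos_ge_1_sub_sqr.
    assert (HjN : 0 <= INR j <= INR N) by (split; [apply pos_INR | apply le_INR; exact Hj]).
    assert (Hc : Rabs (INR j - INR N / 2) <= INR N / 2) by (apply Rabs_le; lra).
    assert (Habs : Rabs (q * (INR j - INR N / 2)) <= PI / 2).
    { rewrite Rabs_mult.
      apply Rle_trans with (Rabs q * (INR N / 2)); [|lra].
      apply Rmult_le_compat_l; [apply Rabs_pos | exact Hc]. }
    apply Rabs_le_between in Habs; lra.
Qed.

Definition band_sum (B : nat) (s : R) : C :=
  sum_n (G := C_AbelianMonoid) (fun j => e2pi ((INR B + INR j) * s)) (B - 1).

Lemma Cmod_band_sum_sqr (B : nat) (s : R) :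
  Cmod (band_sum B s) ^ 2
  = sum_f_R0 (fun j => cos (2 * PI * ((INR B + INR j) * s))) (B - 1) ^ 2
    + sum_f_R0 (fun j => sin (2 * PI * ((INR B + INR j) * s))) (B - 1) ^ 2.
Proof. exact (Cmod_sum_n_sqr _ _). Qed.

Lemma Cmod_D_nat_sqr (p tau : nat) (t : R) :
  let B := beta_nat p in
  Cmod (D_nat p tau t) ^ 2 = Cmod (band_sum B (t - INR tau / INR B)) ^ 2 / INR B.
Proof.
  intros B; unfold B, band_sum; destruct p as [|[|m]].
  - change (D_nat 0 tau t) with (RtoC 1); change (beta_nat 0) with 1%nat.
    rewrite sum_O, Cmod_e2pi, Cmod_R, Rabs_R1; simpl; field.
  - change (D_nat 1 tau t) with (e2pi t); change (beta_nat 1) with 1%nat.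
    rewrite sum_O, !Cmod_e2pi; simpl; field.
  - assert (Hb : 0 < INR (beta_nat (S (S m)))).
    { apply lt_0_INR, Nat.neq_0_lt_0, Nat.pow_nonzero; lia. }
    unfold D_nat; cbv zeta.
    rewrite Cmod_mult, Cmod_R, Rpow_mult_distr, pow2_abs, pow_inv, pow2_sqrt by lra.
    field; lra.
Qed.

Lemma band_sum_sqr_ge (B : nat) (s : R) :
  (1 <= B)%nat -> Rabs s <= / (2 * INR B) ->
  INR B - PI ^ 2 * INR B ^ 3 * s ^ 2 / 3 <= Cmod (band_sum B s) ^ 2 / INR B.
Proof.
  intros HB Hs.
  set (b := INR B) in *.
  assert (Hb : 1 <= b) by (apply (le_INR 1); exact HB).
  assert (HN : INR (B - 1) = b - 1) by (rewrite minus_INR by lia; reflexivity).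
  assert (Hpi := PI_sqr_le); assert (Hpi0 := PI_RGT_0).
  assert (Hsb : Rabs s * b <= / 2).
  { apply Rle_trans with (/ (2 * b) * b); [apply Rmult_le_compat_r; lra | right; field; lra]. }
  set (K := sum_f_R0 (fun j => cos (2 * PI * s * (INR j - INR (B - 1) / 2))) (B - 1)).
  (* rotating by the phase of the middle frequency b + (b-1)/2 *)
  assert (HK : K ^ 2 <= Cmod (band_sum B s) ^ 2).
  { rewrite Cmod_band_sum_sqr.
    set (phi := 2 * PI * ((b + INR (B - 1) / 2) * s)).
    replace K with (sum_f_R0 (fun j => cos (2 * PI * ((b + INR j) * s) - phi)) (B - 1)).
    - exact (sum_cos_sub_sqr_le _ _ _).
    - apply sum_eq; intros j _; unfold phi; f_equal; ring. }
  assert (HKge : b - (2 * PI * s) ^ 2 * ((b - 1) * b * (b + 1)) / 24 <= K).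
  { replace b with (INR (B - 1) + 1) at 1 by lra.
    replace ((b - 1) * b * (b + 1)) with (INR (B - 1) * (INR (B - 1) + 1) * (INR (B - 1) + 2))
      by (rewrite HN; ring).
    apply sum_cos_centered_ge.
    rewrite HN, Rabs_mult, Rabs_mult, (Rabs_right 2), (Rabs_right PI) by lra.
    assert (Rabs s * (b - 1) <= / 2) by (assert (0 <= Rabs s) by apply Rabs_pos; nra).
    nra. }
  set (y := PI ^ 2 * s ^ 2 * b ^ 2).
  assert (Hy : 0 <= y <= 3).
  { assert (Hs2 : s ^ 2 * b ^ 2 <= / 4).
    { rewrite <- (pow2_abs s), <- Rpow_mult_distr.
      assert (0 <= Rabs s * b) by (apply Rmult_le_pos; [apply Rabs_pos | lra]).
      nra. }
    assert (0 <= s ^ 2 * b ^ 2) by (apply Rmult_le_pos; apply pow2_ge_0).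
    assert (0 <= PI ^ 2) by apply pow2_ge_0.
    unfold y; rewrite Rmult_assoc; split; [apply Rmult_le_pos; lra | nra]. }
  assert (HKy : b * (1 - y / 6) <= K).
  { apply Rle_trans with (2 := HKge).
    replace (b - (2 * PI * s) ^ 2 * ((b - 1) * b * (b + 1)) / 24)
      with (b * (1 - y / 6) + PI ^ 2 * s ^ 2 * b / 6) by (unfold y; field).
    assert (0 <= PI ^ 2 * s ^ 2 * b).
    { apply Rmult_le_pos; [apply Rmult_le_pos; apply pow2_ge_0 | lra]. }
    lra. }
  apply Rle_trans with ((b * (1 - y / 6)) ^ 2 / b).
  - replace (b - PI ^ 2 * b ^ 3 * s ^ 2 / 3) with (b * (1 - y / 3)) by (unfold y; field).
    replace ((b * (1 - y / 6)) ^ 2 / b) with (b * (1 - y / 6) ^ 2) by (field; lra).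
    nra.
  - unfold Rdiv; apply Rmult_le_compat_r; [left; apply Rinv_0_lt_compat; lra|].
    apply Rle_trans with (K ^ 2); [|exact HK].
    apply pow_incr; split; [nra | exact HKy].
Qed.

Lemma continuous_Cmod_band_sum_sqr (B : nat) (x : R) :
  continuous (fun s => Cmod (band_sum B s) ^ 2) x.
Proof.
  apply (continuous_ext (fun s =>
    sum_f_R0 (fun j => cos (2 * PI * ((INR B + INR j) * s))) (B - 1) ^ 2
    + sum_f_R0 (fun j => sin (2 * PI * ((INR B + INR j) * s))) (B - 1) ^ 2));
    [intros s; symmetry; apply Cmod_band_sum_sqr|].
  assert (Hsqr : forall v, continuous (fun w : R => w ^ 2) v).
  { intros v; apply (ex_derive_continuous (K := R_AbsRing) (V := R_NormedModule)).
    auto_derive; auto. }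
  apply (continuous_plus (V := R_NormedModule));
    (apply (continuous_comp _ (fun w => w ^ 2)); [|apply Hsqr]);
    apply continuous_sum_f_R0; intros j;
    apply (ex_derive_continuous (K := R_AbsRing) (V := R_NormedModule)); auto_derive; auto.
Qed.

Lemma is_RInt_parabola (c k u h : R) :
  is_RInt (fun t => c - k * (t - u) ^ 2) (u - h) (u + h) (2 * h * c - 2 * k * h ^ 3 / 3).
Proof.
  set (F := fun t => c * t - k * (t - u) ^ 3 / 3).
  replace (2 * h * c - 2 * k * h ^ 3 / 3) with (minus (F (u + h)) (F (u - h)))
    by (unfold minus, plus, opp, F; simpl; field).
  apply (is_RInt_derive (V := R_CompleteNormedModule)); intros t _.
  - unfold F; auto_derive; auto; field.
  - apply (ex_derive_continuous (K := R_AbsRing) (V := R_NormedModule)); auto_derive; auto.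
Qed.

Lemma RInt_band_sum_sqr_ge (B : nat) (u : R) :
  (1 <= B)%nat ->
  let b := INR B in
  1 - PI ^ 2 / 36
  <= RInt (fun t => Cmod (band_sum B (t - u)) ^ 2 / b) (u - 1 / (2 * b)) (u + 1 / (2 * b)).
Proof.
  intros HB b.
  assert (Hb : 1 <= b) by (apply (le_INR 1); exact HB).
  assert (Hparabola := is_RInt_parabola b (PI ^ 2 * b ^ 3 / 3) u (1 / (2 * b))).
  replace (2 * (1 / (2 * b)) * b - 2 * (PI ^ 2 * b ^ 3 / 3) * (1 / (2 * b)) ^ 3 / 3)
    with (1 - PI ^ 2 / 36) in Hparabola by (field; lra).
  rewrite <- (is_RInt_unique _ _ _ _ Hparabola).
  apply RInt_le.
  - assert (0 < 1 / (2 * b)) by (apply Rdiv_lt_0_compat; lra); lra.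
  - eexists; exact Hparabola.
  - apply (ex_RInt_continuous (V := R_CompleteNormedModule)); intros z _.
    apply (continuous_mult (K := R_AbsRing) (fun t => Cmod (band_sum B (t - u)) ^ 2)
             (fun _ => / b)); [|apply continuous_const].
    apply (continuous_comp (fun t => t - u) (fun s => Cmod (band_sum B s) ^ 2));
      [apply (ex_derive_continuous (K := R_AbsRing) (V := R_NormedModule)); auto_derive; auto |].
    apply continuous_Cmod_band_sum_sqr.
  - intros t Ht.
    replace (b - PI ^ 2 * b ^ 3 / 3 * (t - u) ^ 2)
      with (b - PI ^ 2 * b ^ 3 * (t - u) ^ 2 / 3) by field.
    apply band_sum_sqr_ge; [exact HB|].
    apply Rabs_le; unfold b, Rdiv in *; lra.
Qed.

(* The bound holds for every [tau]. *)
Theorem proposition3p4 (p : Z) (tau : nat) :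
  (tau < beta p)%nat ->
  let b := INR (beta p) in
  sqrt (RInt (fun t => (Cmod (DOST p tau t)) ^ 2)
              (INR tau / b - 1 / (2 * b)) (INR tau / b + 1 / (2 * b)))
  > 0.85.
Proof.
  intros _ b.
  assert (HB : (1 <= beta p)%nat).
  { unfold beta; destruct (Z.abs_nat p) as [|[|m]]; [apply le_n | apply le_n |].
    apply Nat.neq_0_lt_0, Nat.pow_nonzero; lia. }
  rewrite (RInt_ext _ (fun t => Cmod (band_sum (beta p) (t - INR tau / b)) ^ 2 / b)).
  2:{ intros t _; unfold DOST.
      destruct (p <? 0)%Z; [rewrite Cmod_conj|]; apply Cmod_D_nat_sqr. }
  assert (Hint := RInt_band_sum_sqr_ge (beta p) (INR tau / b) HB).
  assert (Hpi := PI_sqr_le).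
  apply Rlt_le_trans with (sqrt (1 - PI ^ 2 / 36)); [|apply sqrt_le_1_alt, Hint].
  rewrite <- (sqrt_pow2 0.85) by lra.
  apply sqrt_lt_1_alt; lra.
Qed.
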